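(* Let $X$ be a Hausdorff space. The following are equivalent: (a) $X$ is a weak $P$-space; (b) $\mathcal{K}(X)$ is a weak $P$-space; (c) $\mathcal{F}(X)$ is a weak $P$-space; (d) $\mathcal{F}_n(X)$ is a weak $P$-space for some positive integer $n$.
   Context: For a $T_1$ space $X$, $\mathcal{K}(X)$ is the set of nonempty compact subsets of $X$ with the Vietoris topology (generated by $U^+=\{A: A\subset U\}$ and $U^-=\{A: A\cap U\neq\emptyset\}$ for $U$ open in $X$); $\mathcal{F}(X)$ and $\mathcal{F}_n(X)$ are its subspaces of nonempty finite subsets and of nonempty subsets with at most $n$ points. A point $p$ of a space $Z$ is a weak $P$-point if $p\notin\overline{N}$ for every countable $N\subset Z-\{p\}$; $Z$ is a weak $P$-space if all its points are weak $P$-points. *)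

From HB Require Import structures.
From mathcomp Require Import all_boot all_order all_algebra.
From mathcomp Require Import all_classical all_reals all_analysis.
Set Implicit Arguments. Unset Strict Implicit. Unset Printing Implicit Defensive.
Local Open Scope classical_set_scope.

Definition weak_P_point (T : topologicalType) (p : T) : Prop :=
  forall N : set T, countable N -> N `<=` [set~ p] -> ~ closure N p.

Definition weak_P_space (T : topologicalType) : Prop :=
  forall p : T, weak_P_point p.

(* Closure of N in the topology on T generated by the subbase S:
   p is in the closure iff every basic open set (finite intersection of
   subbasic sets; the empty intersection being T) containing p meets N. *)
Definition subbase_closure (T : Type) (S : set (set T)) (N : set T) : set T :=
  [set p | forall (k : nat) (F : 'I_k -> set T),
     (forall i, S (F i)) -> (forall i, F i p) ->
     exists2 q, N q & forall i, F i q].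

(* Y (as a subspace of the topology generated by S) is a weak P-space.
   For p in Y and N a subset of Y, the closure of N in the subspace Y
   is (closure of N in T) `&` Y, and p is in Y. *)
Definition weak_P_subspace (T : Type) (S : set (set T)) (Y : set T) : Prop :=
  forall p, Y p -> forall N : set T, countable N -> N `<=` Y `\ p ->
    ~ subbase_closure S N p.

(* Vietoris subbase on subsets of X: U^+ and U^- for U open. *)
Definition vietoris_subbase (X : topologicalType) : set (set (set X)) :=
  [set W | exists U : set X, open U /\
     (W = [set A | A `<=` U] \/ W = [set A | A `&` U !=set0])].

Definition hypK (X : topologicalType) : set (set X) :=
  [set A | compact A /\ A !=set0].
Definition hypF (X : topologicalType) : set (set X) :=
  [set A | finite_set A /\ A !=set0].
Definition hypFn (X : topologicalType) (n : nat) : set (set X) :=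
  [set A | A !=set0 /\ exists f : 'I_n -> X, A `<=` range f].
Arguments vietoris_subbase X : clear implicits.
Arguments hypK X : clear implicits.
Arguments hypF X : clear implicits.
Arguments hypFn X n : clear implicits.

From HB Require Import structures.
From mathcomp Require Import all_boot all_order all_algebra.
From mathcomp Require Import all_classical all_reals all_analysis.
Local Open Scope classical_set_scope.

(* In a weak P-space every compact set K is finite: otherwise K carries an
   injective sequence, and a cluster point x of it in K lies in the closure of
   the countably many terms different from x. So K(X) = F(X) when X is a weak
   P-space. Singletons embed X into F_n(X), which gives the way back to X.
   Conversely, let K be finite and N a countable family of finite sets other
   than K. Let D be the union of the sets A \ K for A in N, and for y in K let
   E y be the union of the members of N missing y. These are countable, so
   X \ cl D is an open set containing K and X \ cl (E y) an open set
   containing y. The Vietoris neighbourhood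
   (X \ cl D)^+ /\ (X \ cl (E y))^- (y in K) of K then contains no member
   of N. *)

Lemma infinite_set_injective_seq {T : Type} (K : set T) :
  infinite_set K -> exists2 u : nat -> T, injective u & forall n, K (u n).
Proof.
move=> /infiniteP/card_leP[f].
pose u n := val (f (SigSub (mem_set (I : [set: nat] n)))).
exists u => [m n /val_inj|n]; last exact: set_valP.
by move=> /(@injT _ _ f)/(congr1 val).
Qed.

Lemma injective_seq_eventually_neq {T : Type} {u : nat -> T} :
  injective u -> forall x : T, \forall n \near \oo, u n <> x.
Proof.
move=> uinj x; have [[n0 un0]|nox] := pselect (exists n0, u n0 = x).
  apply: filterS (nbhs_infty_gt n0) => n + unx.
  by rewrite (uinj n n0) ?ltnn // unx.
by apply: nearW => n unx; apply: nox; exists n.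
Qed.

Lemma injective_seq_cluster_closure {X : topologicalType}
    {u : nat -> X} {x : X} :
  injective u -> cluster (u @ \oo) x -> closure (range u `\ x) x.
Proof.
move=> uinj; rewrite clusterE; apply.
suff : \forall n \near \oo, (range u `\ x) (u n) by [].
apply: filterS (injective_seq_eventually_neq uinj x) => n.
by split; first exists n.
Qed.

Lemma weak_P_compact_finite {X : topologicalType} (K : set X) :
  weak_P_space X -> compact K -> finite_set K.
Proof.
move=> wP cK; apply: contrapT => /infinite_set_injective_seq[u uinj uK].
have [x [_ clx]] := cK (u @ \oo) _ (@nearW _ \oo _ _ uK).
apply: (wP x (range u `\ x) _ _ (injective_seq_cluster_closure uinj clx)).
- apply: sub_countable (subset_card_le (@subDsetl _ _ _)) _.
  exact: sub_countable (card_image_le u setT) (countableP _).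
- by move=> y [].
Qed.

Lemma sub_weak_P_subspace {T : Type} {S : set (set T)} {Y Y' : set T} :
  Y' `<=` Y -> weak_P_subspace S Y -> weak_P_subspace S Y'.
Proof.
move=> Y'Y wPY p Y'p N cN NY'; apply: wPY cN _ => //; first exact: Y'Y.
by move=> A /NY'[/Y'Y].
Qed.

Lemma hypFn_sub_hypF (X : topologicalType) (n : nat) : hypFn X n `<=` hypF X.
Proof.
move=> A [A0 [f Af]]; split => //.
exact: sub_finite_set Af (finite_image f finite_finset).
Qed.

Lemma hypF_sub_hypK (X : topologicalType) : hypF X `<=` hypK X.
Proof. by move=> A [fA A0]; split => //; exact: finite_compact. Qed.

Lemma hypK_sub_hypF {X : topologicalType} :
  weak_P_space X -> hypK X `<=` hypF X.
Proof. by move=> wP A [cA A0]; split => //; exact: weak_P_compact_finite. Qed.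

Lemma hypFn_set1 {X : topologicalType} {n : nat} (x : X) :
  (0 < n)%N -> hypFn X n [set x].
Proof.
by move=> n0; split; [exists x | exists (fun=> x) => y ->; exists (Ordinal n0)].
Qed.

Lemma vietoris_subbase_set1_nbhs (X : topologicalType) (W : set (set X))
    (p : X) :
  vietoris_subbase X W -> W [set p] -> \forall x \near p, W [set x].
Proof.
move=> [U [oU [->|->]]] /= Wp.
- by apply: filterS (open_nbhs_nbhs (conj oU (Wp p erefl))) => x Ux y ->.
- have [_ [-> Up]] := Wp.
  by apply: filterS (open_nbhs_nbhs (conj oU Up)) => x Ux; exists x.
Qed.

Lemma closure_subbase_closure_set1 (X : topologicalType) (N : set X)
    (p : X) :
  closure N p -> subbase_closure (vietoris_subbase X) (set1 @` N) [set p].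
Proof.
move=> clN k F SF Fp.
have : \forall x \near p, forall i, F i [set x].
  by apply: filter_forall => i; exact: vietoris_subbase_set1_nbhs.
by move=> /clN[q [Nq Fq]]; exists [set q]; [exists q | exact: Fq].
Qed.

Lemma weak_P_space_of_hypFn {X : topologicalType} {n : nat} : (0 < n)%N ->
  weak_P_subspace (vietoris_subbase X) (hypFn X n) -> weak_P_space X.
Proof.
move=> n0 wPFn p N cN Np /closure_subbase_closure_set1.
apply: (wPFn _ (hypFn_set1 p n0)).
- exact: sub_countable (card_image_le _ _) cN.
- move=> _ [q Nq <-]; split; first exact: hypFn_set1.
  by move=> /= /(congr1 (@^~ q)) qp; apply: (Np q Nq); rewrite -qp.
Qed.

Lemma vietoris_basic_open_seq {X : topologicalType} (s : seq X)
    {U : set X} {V : X -> set X} :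
  open U -> (forall y, open (V y)) ->
  exists2 F : 'I_(size s).+1 -> set (set X),
    forall i, vietoris_subbase X (F i) &
    forall A, (forall i, F i A) <->
      A `<=` U /\ forall y, y \in s -> A `&` V y !=set0.
Proof.
move=> oU oV.
exists (fun j => if unlift ord0 j is Some i
  then [set A | A `&` V (tnth (in_tuple s) i) !=set0] else [set A | A `<=` U]).
  move=> j; case: unlift => [i|].
    by exists (V (tnth (in_tuple s) i)); split; [exact: oV | right].
  by exists U; split; [exact: oU | left].
move=> A; split => [FA | [AU AV] j].
  split; first by have := FA ord0; rewrite unlift_none.
  move=> y /(tnthP (in_tuple s))[i ->].
  by have := FA (lift ord0 i); rewrite liftK.
by case: unlift => [i|] //=; apply: AV; exact: mem_tnth.
Qed.

Lemma weak_P_subspace_hypF {X : topologicalType} :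
  weak_P_space X -> weak_P_subspace (vietoris_subbase X) (hypF X).
Proof.
move=> wP K [/finite_seqP[s eK] _] N cN NF.
have finN A : N A -> finite_set A by move=> /NF[[]].
pose D := \bigcup_(A in N) (A `\` K).
pose E y := \bigcup_(A in [set A | N A /\ ~ A y]) A.
have cD : countable D.
  apply: bigcup_countable cN _ => A NA.
  exact/finite_set_countable/finite_setD/finN.
have cE y : countable (E y).
  apply: bigcup_countable (sub_countable (subset_card_le _) cN) _ => [A []//|].
  by move=> A [NA _]; exact/finite_set_countable/finN.
have KD : K `<=` ~` closure D.
  move=> y Ky; apply: (wP y D cD) => z [A _ [_ nKz]] zy.
  by apply: nKz; rewrite zy.
have EV y : (~` closure (E y)) y.
  by apply: (wP y (E y) (cE y)) => z [A [_ Ay] Az] zy; apply: Ay; rewrite -zy.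
have [F SF FE] := vietoris_basic_open_seq s
  (closed_openC (@closed_closure _ D))
  (fun y => closed_openC (@closed_closure _ (E y))).
have FK : forall i, F i K.
  apply/FE; split => // y ys; have Ky : K y by rewrite eK.
  by exists y; split; [exact: Ky | exact: EV].
move=> /(_ _ F SF FK)[A NA /FE[AD AE]].
have AK : A `<=` K.
  move=> z Az; apply: contrapT => nKz; apply: (AD z Az).
  by apply: subset_closure; exists A.
have KA : K `<=` A.
  move=> y; rewrite eK => /AE[z [Az Ez]]; apply: contrapT => Ay.
  by apply: Ez; apply: subset_closure; exists A.
by have [_ /=] := NF A NA; apply; apply/seteqP.
Qed.

Theorem theorem4p4 (X : topologicalType) (hX : hausdorff_space X) :
  [/\ weak_P_space X <-> weak_P_subspace (vietoris_subbase X) (hypK X),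
      weak_P_space X <-> weak_P_subspace (vietoris_subbase X) (hypF X) &
      weak_P_space X <->
        exists n : nat, (0 < n)%N /\
          weak_P_subspace (vietoris_subbase X) (hypFn X n)].
Proof.
have F1F := hypFn_sub_hypF X 1.
have F1X := @weak_P_space_of_hypFn X 1 isT.
split; split => [wP | wPY].
- exact: sub_weak_P_subspace (hypK_sub_hypF wP) (weak_P_subspace_hypF wP).
- by apply/F1X/(sub_weak_P_subspace _ wPY) => A /F1F/hypF_sub_hypK.
- exact: weak_P_subspace_hypF.
- exact/F1X/(sub_weak_P_subspace F1F wPY).
- exists 1%N; split => //.
  exact: sub_weak_P_subspace F1F (weak_P_subspace_hypF wP).
- by have [n [n0 wPFn]] := wPY; exact: weak_P_space_of_hypFn n0 wPFn.
Qed.
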